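(* Let $m\geq 1$ and for each $i\geq 1$ let $\Lambda_i=a_1^{(i)}\mathbb{Z}\times a_2^{(i)}\mathbb{Z}\times\dots\times a_m^{(i)}\mathbb{Z}$ with $(a_1^{(i)},\dots,a_m^{(i)})\in\mathbb{N}^m\setminus\{(1,\dots,1)\}$. Let $\eta=\mathbb{1}_{\mathbb{Z}^m\setminus\bigcup_{i\geq1}\Lambda_i}\in\{0,1\}^{\mathbb{Z}^m}$ and $X_\eta$ its orbit closure. Then $(X_\eta,(S_{\mathbf{n}})_{\mathbf{n}\in\mathbb{Z}^m})$ is proximal if and only if $\{\Lambda_i\}_{i\geq1}$ contains an infinite subset of pairwise coprime lattices.
   Context: The shift on $\{0,1\}^{\mathbb{Z}^m}$ is $(S_{\mathbf{n}}x)_{\mathbf{g}}=x_{\mathbf{g}+\mathbf{n}}$; $X_\eta$ is the closure (product topology) of $\{S_{\mathbf{n}}\eta\}$. A system is proximal if every pair $(x,y)$ of its points satisfies $\liminf_{\mathbf{n}\to\infty}D(S_{\mathbf{n}}x,S_{\mathbf{n}}y)=0$ for a compatible metric $D$. Two proper subgroups $\Lambda,\Lambda'$ of $\mathbb{Z}^m$ are coprime if $\Lambda+\Lambda'=\mathbb{Z}^m$. *)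

From HB Require Import structures.
From mathcomp Require Import all_boot all_order all_algebra.
From Stdlib Require Import ClassicalEpsilon.
Set Implicit Arguments. Unset Strict Implicit. Unset Printing Implicit Defensive.
Import Order.TTheory GRing.Theory Num.Theory.
Local Open Scope ring_scope.

Definition pt (m : nat) := 'I_m -> int.
Definition ptadd m (g n : pt m) : pt m := fun j => g j + n j.

Definition config (m : nat) := pt m -> bool.

Definition shift m (n : pt m) (x : config m) : config m := fun g => x (ptadd g n).

Definition inbox m (N : nat) (g : pt m) : Prop := forall j, (`|g j| <= N)%N.

(* Orbit closure X_eta in the product topology: x is a limit of shifts of eta,
   i.e. every finite window of x agrees with the same window of some S_n eta. *)
Definition orbit_closure m (eta : config m) : config m -> Prop :=
  fun x => forall N : nat, exists n : pt m,
      forall g, inbox N g -> x g = shift n eta g.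

(* liminf_{n -> oo} D(S_n x, S_n y) = 0 for the standard (compatible) metric
   on the product space: for every window size N and every bound K there is n
   with |n|_oo > K such that S_n x and S_n y agree on [-N,N]^m. *)
Definition proximal_pair m (x y : config m) : Prop :=
  forall N K : nat, exists n : pt m,
      (exists j, (K < `|n j|)%N) /\
      forall g, inbox N g -> shift n x g = shift n y g.

Definition proximal m (X : config m -> Prop) : Prop :=
  forall x y, X x -> X y -> proximal_pair x y.

Definition inLam m (a : 'I_m -> nat) (g : pt m) : Prop :=
  forall j, (Posz (a j) %| g j)%Z.

Definition coprime_lat m (a b : 'I_m -> nat) : Prop :=
  forall g : pt m, exists u v : pt m, inLam a u /\ inLam b v /\ g = ptadd u v.

Definition eta_of m (a : nat -> 'I_m -> nat) : config m :=
  fun g => if excluded_middle_informative (exists i, inLam (a i) g)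
           then false else true.

From HB Require Import structures.
From mathcomp Require Import all_boot all_order all_algebra.
From mathcomp Require Import zify ring.
From Stdlib Require Import ClassicalEpsilon Classical FunctionalExtensionality.
Import Order.TTheory GRing.Theory Num.Theory.
Set Implicit Arguments. Unset Strict Implicit. Unset Printing Implicit Defensive.

(** Suppose finitely many lattices [Lambda_k], [k \in s], are such that every
    [Lambda_i] shares a prime with one of them in some coordinate. A point [h]
    congruent to [1] modulo all their periods lies in no [Lambda_i] (that prime
    would divide [h_j] and [h_j - 1]) while [h - 1] lies in every [Lambda_k];
    putting [h] inside the window shows that [eta] and [S_(-1) eta] are never
    close, so [X_eta] is not proximal.
    Otherwise a greedy choice yields infinitely many pairwise coprime lattices.
    Conversely, given such a family, [x, y] in [X_eta] and a window [W], the
    Chinese remainder theorem gives an arbitrarily large [n] sending, through the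
    shifts of [eta] approximating [x] and [y], every point of [W + n] into some
    lattice of the family; then [S_n x] and [S_n y] both vanish on [W]. *)

Local Open Scope ring_scope.

Lemma common_multiple (I : eqType) (F : I -> nat) (s : seq I) :
  {in s, forall i, 0 < F i}%N -> exists2 M, (0 < M)%N & {in s, forall i, F i %| M}%N.
Proof.
elim: s => [|i s IH] Fpos; first by exists 1%N.
have [|M M_gt0 dvdM] := IH; first by move=> k ks; apply: Fpos; rewrite inE ks orbT.
exists (F i * M)%N; first by rewrite muln_gt0 M_gt0 Fpos ?mem_head.
move=> k; rewrite inE => /orP[/eqP-> | ks]; first exact: dvdn_mulr.
by apply: dvdn_mull; apply: dvdM.
Qed.

Lemma exists_mod_rep (Q : nat) (b x : int) : (0 < Q)%N ->
  exists y : int, [/\ b <= y, y < b + Q%:Z & (Q%:Z %| y - x)%Z].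
Proof.
move=> Q_gt0; have Q_neq0 : Q%:Z != 0 by rewrite eqz_nat -lt0n.
exists (b + ((x - b) %% Q%:Z)%Z); split.
- by rewrite lerDl modz_ge0.
- by rewrite ltrD2l ltz_pmod.
- have -> : b + ((x - b) %% Q%:Z)%Z - x = - (((x - b) %/ Q%:Z)%Z * Q%:Z).
    by move: (divz_eq (x - b) Q%:Z); lia.
  by rewrite rpredN; apply: dvdz_mull; apply: dvdzz.
Qed.

Lemma coprime_of_dvdz_consecutive (d e : nat) (x : int) :
  (d%:Z %| x)%Z -> (e%:Z %| x - 1)%Z -> coprime d e.
Proof.
move=> dx ex.
have gx : ((gcdn d e)%:Z %| x)%Z by apply: dvdz_trans dx; apply: dvdn_gcdl.
have gx1 : ((gcdn d e)%:Z %| x - 1)%Z by apply: dvdz_trans ex; apply: dvdn_gcdr.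
by have := rpredB gx gx1; rewrite opprB addrC subrK dvdz1.
Qed.

Lemma chinese_remainder_seq (I : eqType) (M : I -> nat) (c : I -> int) (s : seq I) :
  uniq s -> (forall i k, i != k -> coprime (M i) (M k)) ->
  exists x : int, {in s, forall i, ((M i)%:Z %| x - c i)%Z}.
Proof.
move=> + Mcop; elim: s => [|i s IH] /=; first by exists 0.
case/andP=> i_notin_s /IH[x Hx].
pose P := (\prod_(k <- s) M k)%N.
have coP : coprimez P%:Z (M i)%:Z.
  rewrite coprimezE /= /P big_seq; apply: (big_ind (fun p => coprime p (M i))).
  - exact: coprime1n.
  - by move=> p q; rewrite coprimeMl => -> ->.
  - by move=> k ks; apply: Mcop; apply: contraNneq i_notin_s => <-.
exists (zchinese P%:Z (M i)%:Z x (c i)) => k; rewrite inE => /orP[/eqP-> | ks].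
  by rewrite -eqz_mod_dvd zchinese_modr.
have Mk_dvd_P : (M k %| P)%N by rewrite /P (big_rem k ks) dvdn_mulr.
set z := zchinese _ _ _ _.
have -> : z - c k = (z - x) + (x - c k) by ring.
rewrite rpredD ?Hx //; apply: (@dvdz_trans P%:Z) => //.
by rewrite -eqz_mod_dvd zchinese_modl.
Qed.

Lemma greedy_pairwise (T : eqType) (P : T -> T -> Prop) :
  (forall x y, P x y -> P y x) ->
  (forall s : seq T, exists x, forall y, y \in s -> P x y) ->
  exists phi : nat -> T, forall i k, i <> k -> P (phi i) (phi k).
Proof.
move=> P_sym avoid.
pose pick s := proj1_sig (constructive_indefinite_description _ (avoid s)).
have pickP s : forall y, y \in s -> P (pick s) y.
  by rewrite /pick; case: constructive_indefinite_description.
pose fix prefix n := if n is n'.+1 then pick (prefix n') :: prefix n' else [::].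
have prefixP i k : (i < k)%N -> pick (prefix i) \in prefix k.
  elim: k => // k IH; rewrite ltnS leq_eqVlt inE => /orP[/eqP-> | /IH->];
    by rewrite ?eqxx ?orbT.
exists (fun n => pick (prefix n)) => i k /eqP; case: ltngtP => // [ik | ki] _.
  by apply: P_sym; apply: pickP; apply: prefixP.
by apply: pickP; apply: prefixP.
Qed.

Section Lattices.
Variable m : nat.
Implicit Types (b c : 'I_m -> nat) (g : pt m).

Lemma coprime_latP b c : coprime_lat b c <-> forall j, coprime (b j) (c j).
Proof.
split=> [bc j | bc g].
  have [u [v [ub [vc /(congr1 (fun h => h j))]]]] := bc (fun k => (k == j)%:R).
  rewrite /ptadd eqxx /= mulr1n => uv1.
  apply: (coprime_of_dvdz_consecutive (x := u j)) => //.
  by rewrite uv1 opprD addNKr rpredN.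
pose uv j := Bezoutz (b j)%:Z (c j)%:Z.
exists (fun j => g j * projT1 (uv j) * (b j)%:Z).
exists (fun j => g j * sval (projT2 (uv j)) * (c j)%:Z).
split; [by move=> j; apply: dvdz_mull | split; first by move=> j; apply: dvdz_mull].
apply: functional_extensionality => j; rewrite /ptadd.
case: (uv j) => u [v /= E].
by rewrite -!mulrA -mulrDr E /gcdz /= (eqP (bc j)) mulr1.
Qed.

Lemma coprime_lat_sym b c : coprime_lat b c -> coprime_lat c b.
Proof. by move=> /coprime_latP bc; apply/coprime_latP => j; rewrite coprime_sym. Qed.

Lemma eq1_of_coprime_lat_self b : coprime_lat b b -> forall j, b j = 1%N.
Proof. by move=> /coprime_latP bb j; have := bb j; rewrite /coprime gcdnn => /eqP. Qed.

Lemma inbox_ffun (N : nat) g : inbox N g ->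
  exists f : {ffun 'I_m -> 'I_(N.*2).+1}, forall j, g j = (f j)%:Z - N%:Z.
Proof.
move=> gN; exists [ffun j => inord (absz (g j + N%:Z))] => j.
have gNj := gN j; rewrite ffunE inordK; lia.
Qed.

Lemma exists_shift_into_lattices (I : finType) (L : I -> 'I_m -> nat) (p : I -> pt m)
    (Q : nat) (b : int) :
  (forall i k, i != k -> coprime_lat (L i) (L k)) ->
  (0 < Q)%N -> (forall i j, L i j %| Q)%N ->
  exists n : pt m,
    (forall j, b <= n j < b + Q%:Z) /\ forall i, inLam (L i) (ptadd (p i) n).
Proof.
move=> Lcop Q_gt0 dvdQ.
have crt j : exists y, [/\ b <= y, y < b + Q%:Z & forall i, ((L i j)%:Z %| p i j + y)%Z].
  have [|x Hx] := @chinese_remainder_seq _ (fun i => L i j) (fun i => - p i j) _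
    (enum_uniq I).
    by move=> i k /Lcop /coprime_latP.
  have [y [b_le_y y_lt Qy]] := exists_mod_rep b x Q_gt0.
  exists y; split=> // i.
  have -> : p i j + y = (y - x) + (x - - p i j) by ring.
  by rewrite rpredD ?Hx ?mem_enum //; apply: (@dvdz_trans Q%:Z) => //; apply: dvdQ.
have [n Hn] := fin_all_exists crt.
exists n; split=> [j | i j]; have [b_le_n n_lt dvd_n] := Hn j.
  by rewrite b_le_n n_lt.
exact: dvd_n.
Qed.

End Lattices.

Lemma orbit_closure_shift m (eta : config m) n : orbit_closure eta (shift n eta).
Proof. by move=> N; exists n. Qed.

Lemma orbit_closure_self m (eta : config m) : orbit_closure eta eta.
Proof.
have shift0 : shift (fun _ => 0) eta = eta.
  by apply: functional_extensionality => g; rewrite /shift /ptadd; congr eta;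
     apply: functional_extensionality => j; rewrite addr0.
by rewrite -{2}shift0; apply: orbit_closure_shift.
Qed.

Section ProximalEta.
Variables (m : nat) (a : nat -> 'I_m -> nat).
Hypothesis a_gt0 : forall i j, (0 < a i j)%N.

Lemma eta_ofF g i : inLam (a i) g -> eta_of a g = false.
Proof. by move=> gi; rewrite /eta_of; case: excluded_middle_informative => // -[]; exists i. Qed.

Lemma eta_ofT g : (forall i, ~ inLam (a i) g) -> eta_of a g = true.
Proof.
by move=> gNi; rewrite /eta_of; case: excluded_middle_informative => // -[i gi]; case: (gNi i).
Qed.

Lemma not_proximal_of_finite_cover (s : seq nat) :
  (forall i, exists2 k, k \in s & ~ coprime_lat (a i) (a k)) ->
  ~ proximal (orbit_closure (eta_of a)).
Proof.
move=> cover prox.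
have [|M M_gt0 dvdM] := @common_multiple _ (fun kj => a kj.1 kj.2)
  [seq (k, j) | k <- s, j <- enum 'I_m]; first by move=> ??; apply: a_gt0.
have dvd_aM k j : k \in s -> (a k j %| M)%N.
  by move=> ks; apply: (dvdM (k, j)); apply: allpairs_f; rewrite ?mem_enum.
pose down : pt m := fun _ => -1.
have [n [_ agree]] := prox _ _ (orbit_closure_self _) (orbit_closure_shift _ down) M 0%N.
have [g Hg] := fin_all_exists (fun j => exists_mod_rep 0 (1 - n j) M_gt0).
have g_in : inbox M g by move=> j; have [g_ge0 g_lt _] := Hg j; lia.
pose h := ptadd g n.
have hM j : (M%:Z %| h j - 1)%Z.
  by have [_ _] := Hg j; rewrite /h /ptadd opprB addrA.
have eta_h : eta_of a h = true.
  apply: eta_ofT => i hi; have [k ks] := cover i; apply; apply/coprime_latP => j.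
  by apply: (coprime_of_dvdz_consecutive (hi j)); apply: dvdz_trans (hM j); apply: dvd_aM.
have eta_h_down : eta_of a (ptadd h down) = false.
  have [k ks _] := cover 0%N; apply: (eta_ofF (i := k)) => j.
  by apply: dvdz_trans (hM j); apply: dvd_aM.
by have := agree g g_in; rewrite /shift -/h eta_h eta_h_down.
Qed.

Lemma proximal_coprime_subfamily : (forall i, exists j, a i j <> 1%N) ->
  proximal (orbit_closure (eta_of a)) ->
  exists phi : nat -> nat, injective phi /\
    (forall i k, i <> k -> coprime_lat (a (phi i)) (a (phi k))).
Proof.
move=> a_ne1 prox.
have avoid (s : seq nat) : exists i, forall k, k \in s -> coprime_lat (a i) (a k).
  apply: NNPP => no_i; apply: (@not_proximal_of_finite_cover s _ prox) => i.
  apply: NNPP => no_k; apply: no_i; exists i => k ks.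
  by apply: NNPP => nco; apply: no_k; exists k.
have [phi phi_cop] := greedy_pairwise (fun x y => @coprime_lat_sym m (a x) (a y)) avoid.
exists phi; split=> // i k phi_ik; apply: NNPP => ik.
have [j /(_ (eq1_of_coprime_lat_self _ j))] := a_ne1 (phi i); apply.
by rewrite {2}phi_ik; apply: phi_cop.
Qed.

Lemma coprime_subfamily_proximal (phi : nat -> nat) : (0 < m)%N ->
  (forall i k, i <> k -> coprime_lat (a (phi i)) (a (phi k))) ->
  proximal (orbit_closure (eta_of a)).
Proof.
move=> m_gt0 phi_cop x y x_in y_in N K.
(* One lattice of the family for each point of the window and each of [x], [y]. *)
pose I : finType := ({ffun 'I_m -> 'I_(N.*2).+1} * bool)%type.
pose L (i : I) := a (phi (enum_rank i)).
have L_cop i k : i != k -> coprime_lat (L i) (L k).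
  by move=> /eqP ik; apply: phi_cop => /val_inj/enum_rank_inj.
have [|Q Q_gt0 dvdQ] := @common_multiple _ (fun ij : I * 'I_m => L ij.1 ij.2)
  [seq (i, j) | i <- enum I, j <- enum 'I_m]; first by move=> ??; apply: a_gt0.
have dvd_LQ i j : (L i j %| Q)%N.
  by apply: (dvdQ (i, j)); apply: allpairs_f; rewrite mem_enum.
pose N' := (N + K.+2 * Q)%N.
have [t t_agree] := x_in N'; have [t' t'_agree] := y_in N'.
pose p (i : I) : pt m := fun j => (i.1 j)%:Z - N%:Z + (if i.2 then t' j else t j).
have [n [n_range n_hit]] := exists_shift_into_lattices p (K.+1 * Q)%:Z L_cop Q_gt0 dvd_LQ.
exists n; split.
  exists (Ordinal m_gt0); have := n_range (Ordinal m_gt0).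
  have : (K.+1 <= K.+1 * Q)%N by rewrite leq_pmulr.
  lia.
move=> g g_in; have [f Hf] := inbox_ffun g_in.
have gn_in : inbox N' (ptadd g n).
  by move=> j; have := n_range j; have := g_in j; rewrite /ptadd /N' mulSn; lia.
have hit (b : bool) : inLam (L (f, b)) (ptadd (ptadd g n) (if b then t' else t)).
  by move=> j; have := n_hit (f, b) j; rewrite /p /ptadd /= -Hf addrAC; case: b.
by rewrite /shift t_agree // t'_agree // /shift (eta_ofF (hit false)) (eta_ofF (hit true)).
Qed.

End ProximalEta.

Theorem corollary1p3 (m : nat) (hm : (1 <= m)%N)
  (a : nat -> 'I_m -> nat)
  (hpos : forall i j, (0 < a i j)%N)
  (hne1 : forall i, exists j, a i j <> 1%N) :
  proximal (orbit_closure (eta_of a)) <->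
  exists phi : nat -> nat, injective phi /\
    (forall i k, i <> k -> coprime_lat (a (phi i)) (a (phi k))).
Proof.
split; first exact: proximal_coprime_subfamily.
by case=> phi [_ phi_cop]; apply: (coprime_subfamily_proximal hpos hm phi_cop).
Qed.
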